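(* Let $\alpha>0$, $\beta,\eta,\kappa\in\mathbb{R}$, $\rho>0$, $p\geq 1$, and $0\le a<x$. Let $f,g$ be two positive functions on $[0,\infty)$ with $f,g\in X^{p}_{c}(a,x)$ (for some $c\in\mathbb{R}$), such that ${}^{\rho}\mathcal{I}^{\alpha,\beta}_{a+,\eta,\kappa}f^{p}(x)<\infty$ and ${}^{\rho}\mathcal{I}^{\alpha,\beta}_{a+,\eta,\kappa}g^{p}(x)<\infty$. Suppose there are real numbers $a_1,A,b_1,B$ with $0\leq a_1\leq f(t)\leq A$ and $0\leq b_1\leq g(t)\leq B$ for all $t\in[a,x]$. Then $$\left({}^{\rho}\mathcal{I}^{\alpha,\beta}_{a+,\eta,\kappa}f^{p}(x)\right)^{1/p}+\left({}^{\rho}\mathcal{I}^{\alpha,\beta}_{a+,\eta,\kappa}g^{p}(x)\right)^{1/p}\leq c_{5}\left({}^{\rho}\mathcal{I}^{\alpha,\beta}_{a+,\eta,\kappa}(f+g)^{p}(x)\right)^{1/p},$$ where $c_{5}=\frac{A(a_1+B)+B(A+b_1)}{(A+b_1)(a_1+B)}$.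
   Context: For $c\in\mathbb{R}$ and $1\le p<\infty$, $X^{p}_{c}(a,b)$ denotes the space of Lebesgue measurable functions $f$ on $(a,b)$ with $\left(\int_a^b |t^{c}f(t)|^{p}\,\frac{dt}{t}\right)^{1/p}<\infty$. For $\alpha>0$, $\beta,\eta,\kappa\in\mathbb{R}$, $\rho>0$, $0\le a<x$, and a function $\varphi$, the generalized (Katugampola) fractional integral is $${}^{\rho}\mathcal{I}^{\alpha,\beta}_{a+,\eta,\kappa}\varphi(x)=\frac{\rho^{1-\beta}x^{\kappa}}{\Gamma(\alpha)}\int_{a}^{x}\frac{\tau^{\rho(\eta+1)-1}}{(x^{\rho}-\tau^{\rho})^{1-\alpha}}\varphi(\tau)\,d\tau,$$ whenever the integral exists. Notation such as ${}^{\rho}\mathcal{I}^{\alpha,\beta}_{a+,\eta,\kappa}(f+g)^{p}(x)$ means the operator applied to $\tau\mapsto(f(\tau)+g(\tau))^p$, evaluated at $x$. *)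

From HB Require Import structures.
From mathcomp Require Import all_boot all_order all_algebra.
From mathcomp Require Import all_classical all_reals all_analysis.
Set Implicit Arguments. Unset Strict Implicit. Unset Printing Implicit Defensive.
Import Order.TTheory GRing.Theory Num.Theory.
Local Open Scope classical_set_scope.
Local Open Scope ring_scope.

Definition Gamma_fun (R : realType) (s : R) : R :=
  fine (\int[lebesgue_measure]_(t in `]0%R, +oo[) ((t `^ (s - 1)) * expR (- t))%:E)%E.

Definition Xpc (R : realType) (c p a b : R) (f : R -> R) : Prop :=
  measurable_fun `]a, b[ f /\
  (\int[lebesgue_measure]_(t in `]a, b[) ((`|t `^ c * f t| `^ p) / t)%:E < +oo)%E.

Definition katugampola (R : realType) (rho alpha beta eta kappa a : R)
    (phi : R -> R) (x : R) : \bar R :=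
  ((rho `^ (1 - beta) * x `^ kappa / Gamma_fun alpha)%:E *
   \int[lebesgue_measure]_(tau in `]a, x[)
      ((tau `^ (rho * (eta + 1) - 1)) * (x `^ rho - tau `^ rho) `^ (alpha - 1) * phi tau)%:E)%E.

From HB Require Import structures.
From mathcomp Require Import all_boot all_order all_algebra.
From mathcomp Require Import all_classical all_reals all_analysis.
From mathcomp Require Import measurable_realfun ring lra.
Import Order.TTheory GRing.Theory Num.Theory.
Local Open Scope classical_set_scope.
Local Open Scope ring_scope.

(* On [a, x], 0 <= a1 <= f <= A and 0 <= b1 <= g <= B give the pointwise bounds
   f <= A / (A + b1) * (f + g) and g <= B / (a1 + B) * (f + g), and the two
   factors add up to c5.  The fractional integral is monotone and positively
   homogeneous, so u |-> (I u^p)^(1/p) turns a bound 0 <= u <= k v into the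
   same bound with the same factor k; adding the two bounds gives the claim. *)

Lemma ler_share_of_sum (R : realFieldType) (u v A b : R) :
  0 <= b -> b <= v -> 0 <= u -> u <= A -> u <= A / (A + b) * (u + v).
Proof.
move=> b_ge0 b_le_v u_ge0 u_le_A.
have [Ab_eq0 | Ab_neq0] := eqVneq (A + b) 0.
  have A_eq0 : A = 0 by lra.
  by rewrite A_eq0 mul0r; lra.
rewrite mulrAC ler_pdivlMr; [nra | lra].
Qed.

Lemma ge0_le_integral_scaled (d : measure_display) (T : measurableType d)
    (R : realType) (mu : {measure set T -> \bar R}) (D : set T)
    (h1 h2 : T -> R) (k : R) :
  measurable D -> measurable_fun D h1 -> measurable_fun D h2 -> 0 <= k ->
  (forall t, D t -> 0 <= h2 t) -> (forall t, D t -> 0 <= h1 t <= k * h2 t) ->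
  (\int[mu]_(t in D) (h1 t)%:E <= k%:E * \int[mu]_(t in D) (h2 t)%:E)%E.
Proof.
move=> mD mh1 mh2 k_ge0 h2_ge0 h1_bound.
rewrite -ge0_integralZl_EFin //; last exact/measurable_EFinP.
apply: ge0_le_integral => //.
- by move=> t /h1_bound /andP[? _]; rewrite lee_fin.
- exact/measurable_EFinP.
- exact/measurable_EFinP/measurable_funM.
- by move=> t /h1_bound /andP[_ ?]; rewrite lee_fin.
Qed.

Lemma Gamma_fun_ge0 (R : realType) (s : R) : 0 <= Gamma_fun s.
Proof.
rewrite /Gamma_fun fine_ge0 //; apply: integral_ge0 => t _.
by rewrite lee_fin mulr_ge0 ?powR_ge0 ?expR_ge0.
Qed.

Section katugampola_monotone.
Variables (R : realType) (rho alpha beta eta kappa a x : R).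

Let kernel (tau : R) :=
  tau `^ (rho * (eta + 1) - 1) * (x `^ rho - tau `^ rho) `^ (alpha - 1).

Let kernel_ge0 tau : 0 <= kernel tau.
Proof. by rewrite mulr_ge0 ?powR_ge0. Qed.

Let measurable_kernel : measurable_fun `]a, x[ kernel.
Proof.
apply: measurable_funM; first exact: measurable_funTS (measurable_powR _).
apply: (measurableT_comp (measurable_powR _)).
apply: measurable_funB; first exact: measurable_cst.
exact: measurable_funTS (measurable_powR _).
Qed.

Lemma le_katugampola (phi psi : R -> R) (k : R) :
  0 <= k -> measurable_fun `]a, x[ phi -> measurable_fun `]a, x[ psi ->
  (forall t, a < t < x -> 0 <= psi t) ->
  (forall t, a < t < x -> 0 <= phi t <= k * psi t) ->
  (katugampola rho alpha beta eta kappa a phi x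
   <= k%:E * katugampola rho alpha beta eta kappa a psi x)%E.
Proof.
move=> k_ge0 mphi mpsi psi_ge0 phi_bound.
rewrite /katugampola muleCA; apply: lee_wpmul2l.
  by rewrite lee_fin divr_ge0 ?mulr_ge0 ?powR_ge0 ?Gamma_fun_ge0.
apply: ge0_le_integral_scaled => //; try exact: measurable_funM.
- by move=> t /=; rewrite in_itv /= => /psi_ge0 ?; rewrite mulr_ge0 ?(kernel_ge0 t).
move=> t /=; rewrite in_itv /= => /phi_bound /andP[phi_ge0 phi_le].
by rewrite mulr_ge0 ?(kernel_ge0 t) //= mulrCA ler_wpM2l ?(kernel_ge0 t).
Qed.

Lemma katugampola_ge0 (phi : R -> R) :
  (forall t, a < t < x -> 0 <= phi t) ->
  (0 <= katugampola rho alpha beta eta kappa a phi x)%E.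
Proof.
move=> phi_ge0; rewrite /katugampola mule_ge0 //.
  by rewrite lee_fin divr_ge0 ?mulr_ge0 ?powR_ge0 ?Gamma_fun_ge0.
apply: integral_ge0 => t; rewrite /= in_itv /= => /phi_ge0 ?.
by rewrite lee_fin mulr_ge0 ?(kernel_ge0 t).
Qed.

Lemma le_katugampola_powR_root (p : R) (u v : R -> R) (k : R) :
  0 < p -> 0 <= k -> measurable_fun `]a, x[ u -> measurable_fun `]a, x[ v ->
  (forall t, a < t < x -> 0 <= v t) ->
  (forall t, a < t < x -> 0 <= u t <= k * v t) ->
  (poweR (katugampola rho alpha beta eta kappa a (fun t => powR (u t) p) x) p^-1
   <= k%:E * poweR (katugampola rho alpha beta eta kappa a (fun t => powR (v t) p) x) p^-1)%E.
Proof.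
move=> p_gt0 k_ge0 mu mv v_ge0 u_bound.
have powp_le : (katugampola rho alpha beta eta kappa a (fun t => powR (u t) p) x
    <= (k `^ p)%:E * katugampola rho alpha beta eta kappa a (fun t => powR (v t) p) x)%E.
  apply: le_katugampola.
  - exact: powR_ge0.
  - exact: measurableT_comp (measurable_powR _) mu.
  - exact: measurableT_comp (measurable_powR _) mv.
  - by move=> t _; exact: powR_ge0.
  move=> t t_in; have /andP[u_ge0 u_le] := u_bound t t_in.
  rewrite powR_ge0 /= -powRM ?v_ge0 //.
  by apply: ge0_ler_powR; rewrite ?nnegrE ?(ltW p_gt0) ?mulr_ge0 ?v_ge0.
have kat_powR_ge0 (w : R -> R) :
    (0 <= katugampola rho alpha beta eta kappa a (fun t => powR (w t) p) x)%E.
  by apply: katugampola_ge0 => t _; exact: powR_ge0.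
have p_inv_ge0 : 0 <= p^-1 by rewrite invr_ge0 ltW.
apply: le_trans (gt0_ler_poweR p_inv_ge0 _ _ powp_le) _.
- by rewrite in_itv /= leey andbT kat_powR_ge0.
- by rewrite in_itv /= leey andbT mule_ge0 ?kat_powR_ge0 ?lee_fin ?powR_ge0.
rewrite poweRM ?kat_powR_ge0 ?lee_fin ?powR_ge0 //.
by rewrite poweR_EFin -powRrM mulfV ?gt_eqF ?powRr1.
Qed.

End katugampola_monotone.

Theorem theorem13 (R : realType) (alpha beta eta kappa rho p a x c : R)
  (f g : R -> R) (a1 A b1 B : R) :
  0 < alpha -> 0 < rho -> 1 <= p -> 0 <= a -> a < x ->
  (forall t, 0 <= t -> 0 < f t) -> (forall t, 0 <= t -> 0 < g t) ->
  Xpc c p a x f -> Xpc c p a x g ->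
  (katugampola rho alpha beta eta kappa a (fun t => powR (f t) p) x < +oo)%E ->
  (katugampola rho alpha beta eta kappa a (fun t => powR (g t) p) x < +oo)%E ->
  (forall t, a <= t <= x -> 0 <= a1 <= f t /\ f t <= A) ->
  (forall t, a <= t <= x -> 0 <= b1 <= g t /\ g t <= B) ->
  let c5 := (A * (a1 + B) + B * (A + b1)) / ((A + b1) * (a1 + B)) in
  (poweR (katugampola rho alpha beta eta kappa a (fun t => powR (f t) p) x) p^-1
   + poweR (katugampola rho alpha beta eta kappa a (fun t => powR (g t) p) x) p^-1
   <= c5%:E * poweR (katugampola rho alpha beta eta kappa a (fun t => powR (f t + g t) p) x) p^-1)%E.
Proof.
move=> _ _ p_ge1 a_ge0 a_lt_x f_gt0 g_gt0 [mf _] [mg _] _ _ f_bound g_bound.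
cbv zeta.
have a_in : a <= a <= x by rewrite lexx ltW.
have [/andP[a1_ge0 _] fa_le_A] := f_bound a a_in.
have [/andP[b1_ge0 _] ga_le_B] := g_bound a a_in.
have [fa_gt0 ga_gt0] := (f_gt0 a a_ge0, g_gt0 a a_ge0).
have [A_ge0 B_ge0 p_gt0] : [/\ 0 <= A, 0 <= B & 0 < p] by split; lra.
have [Ab1_gt0 a1B_gt0] : 0 < A + b1 /\ 0 < a1 + B by split; lra.
have -> : (A * (a1 + B) + B * (A + b1)) / ((A + b1) * (a1 + B))
    = A / (A + b1) + B / (a1 + B) by field; rewrite !gt_eqF.
have interior t : a < t < x -> a <= t <= x by case/andP => *; rewrite !ltW.
have f_share t : a < t < x -> 0 <= f t <= A / (A + b1) * (f t + g t).
  move/interior => t_in; have [/andP[? ?] ?] := f_bound t t_in.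
  have [/andP[? ?] ?] := g_bound t t_in.
  by rewrite ler_share_of_sum ?andbT //; lra.
have g_share t : a < t < x -> 0 <= g t <= B / (a1 + B) * (f t + g t).
  move/interior => t_in; have [/andP[? ?] ?] := f_bound t t_in.
  have [/andP[? ?] ?] := g_bound t t_in.
  by rewrite (addrC (f t)) (addrC a1) ler_share_of_sum ?andbT //; lra.
have fg_ge0 t : a < t < x -> 0 <= f t + g t.
  by move=> /[dup] /f_share /andP[? _] /g_share /andP[? _]; lra.
have mfg : measurable_fun `]a, x[ (fun t => f t + g t) by exact: measurable_funD.
rewrite EFinD ge0_muleDl ?lee_fin ?divr_ge0 ?(ltW Ab1_gt0) ?(ltW a1B_gt0) //.
by apply: leeD; apply: le_katugampola_powR_root;
  rewrite ?divr_ge0 ?(ltW Ab1_gt0) ?(ltW a1B_gt0).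
Qed.
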